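(* Let $G=(V,E)$ be a finite digraph without loops in which every vertex has at least one incoming arc and at least one outgoing arc, and let $p$ be a positive integer. Then $G$ has a directed path-decomposition of width at most $p-1$ if and only if there is a processing of the queue system $Q_G$ with at most $p$ stack-up places.
   Context: A bin $b$ carries a pallet symbol $\mathit{plt}(b)$. For $G=(V,E)$ with $E=\{e_1,\ldots,e_l\}$, the queue system $Q_G=(q_1,\ldots,q_l)$ consists of sequences $q_i=(b_{2i-1},b_{2i})$ of two new distinct bins with $(\mathit{plt}(b_{2i-1}),\mathit{plt}(b_{2i}))=e_i$. For a list $Q=(q_1,\ldots,q_k)$ of sequences of pairwise distinct bins: a subsequence of $q=(b_1,\ldots,b_n)$ is a suffix $q'=(b_j,\ldots,b_n)$ (possibly empty) and $q-q'=(b_1,\ldots,b_{j-1})$; a configuration is $(Q,Q')$ with $Q'=(q'_1,\ldots,q'_k)$, $q'_j$ a subsequence of $q_j$; pallet $t$ is open in $(Q,Q')$ if some bin for $t$ lies in some $q'_i$ and some bin for $t$ lies in some $q_j-q'_j$. A transformation step removes the first bin of one nonempty $q'_i$; a processing is a sequence of transformation steps from $(Q,Q)$ to the configuration with all sequences empty; it uses at most $p$ stack-up places if every configuration along it has at most $p$ open pallets. A directed path-decomposition of $G$ is a sequence $(X_1,\ldots,X_r)$ of subsets of $V$ with: (1) $\bigcup_i X_i=V$; (2) for each arc $(u,v)$ there are $i\le j$ with $u\in X_i$, $v\in X_j$; (3) if $u\in X_i\cap X_j$, $i\le j$, then $u\in X_l$ for all $i\le l\le j$. Its width is $\max_i|X_i|-1$.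 *)

From mathcomp Require Import all_boot.
Set Implicit Arguments. Unset Strict Implicit. Unset Printing Implicit Defensive.

Section Queues.
Variables (B : eqType) (V : finType) (plt : B -> V).

(* A configuration (Q, Q') is encoded by the vector c of the numbers of bins
   already removed from each sequence: q'_i = drop c_i q_i, q_i - q'_i = take c_i q_i. *)
Definition config_ok (Q : seq (seq B)) (c : seq nat) : bool :=
  (size c == size Q) && all (fun x => x.1 <= size x.2) (zip c Q).

Definition remaining (Q : seq (seq B)) (c : seq nat) (i : nat) : seq B :=
  drop (nth 0 c i) (nth [::] Q i).
Definition removed (Q : seq (seq B)) (c : seq nat) (i : nat) : seq B :=
  take (nth 0 c i) (nth [::] Q i).

Definition open_pallet (Q : seq (seq B)) (c : seq nat) (t : V) : bool :=
  has (fun i => has (fun b => plt b == t) (remaining Q c i)) (iota 0 (size Q)) &&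
  has (fun j => has (fun b => plt b == t) (removed Q c j)) (iota 0 (size Q)).

Definition nb_open (Q : seq (seq B)) (c : seq nat) : nat :=
  #|[set t | open_pallet Q c t]|.

Definition trans_step (Q : seq (seq B)) (c c' : seq nat) : bool :=
  has (fun i => (nth 0 c i < size (nth [::] Q i)) &&
                (c' == set_nth 0 c i (nth 0 c i).+1)) (iota 0 (size Q)).

Definition processing (Q : seq (seq B)) (cs : seq (seq nat)) : bool :=
  [&& uniq (flatten Q),
      path (trans_step Q) (nseq (size Q) 0) cs,
      all (config_ok Q) (nseq (size Q) 0 :: cs) &
      last (nseq (size Q) 0) cs == map size Q].

Definition uses_at_most (Q : seq (seq B)) (cs : seq (seq nat)) (p : nat) : bool :=
  all (fun c => nb_open Q c <= p) (nseq (size Q) 0 :: cs).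

Definition has_processing (Q : seq (seq B)) (p : nat) : Prop :=
  exists cs, processing Q cs /\ uses_at_most Q cs p.
End Queues.

Section QG.
Variables (V : finType) (E : rel V).

Definition arcs : seq (V * V) := [seq e <- enum {: V * V} | E e.1 e.2].

(* bins are (e, false) and (e, true) for each arc e: fresh and pairwise distinct *)
Definition binG := ((V * V) * bool)%type.
Definition pltG (b : binG) : V := if b.2 then b.1.2 else b.1.1.
Definition QG : seq (seq binG) := [seq [:: (e, false); (e, true)] | e <- arcs].
End QG.

Section DPD.
Variables (V : finType) (E : rel V).

Definition dir_path_decomp (X : seq {set V}) : Prop :=
  [/\ (forall v, exists2 i, i < size X & v \in nth set0 X i),
      (forall u v, E u v -> exists i j, [/\ i <= j, j < size X,
                     u \in nth set0 X i & v \in nth set0 X j]) &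
      (forall u i j l, i <= l -> l <= j -> j < size X ->
         u \in nth set0 X i -> u \in nth set0 X j -> u \in nth set0 X l)].

Definition dpd_width (X : seq {set V}) : nat := (\max_(A <- X) #|A|) - 1.
End DPD.

From mathcomp Require Import all_boot zify.
Set Implicit Arguments. Unset Strict Implicit. Unset Printing Implicit Defensive.

(* A vertex [t] owns at
   least two bins (one for an incoming and one for an outgoing arc), and along
   a processing the number of removed [t]-bins climbs from 0 to their total by
   steps of at most one; [t] is open exactly while that number is strictly in
   between, so the open sets of the successive configurations are bags of a
   directed path-decomposition: for an arc (u, v), at the moment its u-bin is
   gone and its v-bin is not, u has already been open and v is open now or
   later.  Conversely, given bags X_0, ..., X_(r-1), remove the u-bin of each
   arc (u, v) at the first bag containing u and its v-bin at the last bag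
   containing v; a pallet open while the bin of stage s is removed has a bin
   due at most at s and one due at least at s, so by the interval property
   it lies in X_s. *)

Lemma nat_ivt (f : nat -> nat) i j x :
  (forall k, f k.+1 <= (f k).+1) -> i <= j -> f i <= x <= f j ->
  exists2 k, i <= k <= j & f k = x.
Proof.
move=> fS; elim: j => [|j IH] ij hx.
  by exists i; [rewrite ij leqnn | move: ij hx; rewrite leqn0 => /eqP ->; lia].
case: (leqP x (f j)) => xj; last by exists j.+1; [rewrite ij leqnn | have := fS j; lia].
case: (leqP i j) => ij'; last first.
  have ei : i = j.+1 by lia.
  by exists i; [rewrite leqnn | move: hx; rewrite ei; lia].
by have [|k hk fk] := IH ij'; [lia | exists k; [lia | ]].
Qed.

Lemma has_iota_ord n (a : pred nat) : has a (iota 0 n) = [exists i : 'I_n, a i].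
Proof.
rewrite -val_enum_ord has_map.
by apply/hasP/existsP => [[i _ ai] | [i ai]]; exists i; rewrite ?mem_enum.
Qed.

Lemma last_iota m n : last m (iota m.+1 n) = m + n.
Proof. by elim: n m => [|n IH] m //=; rewrite ?addn0 // IH addnS. Qed.

Lemma path_map_iota (T : Type) (f : nat -> T) (r : rel T) m n :
  (forall k, m <= k < m + n -> r (f k) (f k.+1)) ->
  path r (f m) (map f (iota m.+1 n)).
Proof.
elim: n m => [|n IH] m h //=; apply/andP; split; first by apply: h; lia.
by apply: IH => k hk; apply: h; lia.
Qed.

Lemma has_drop2 (T : Type) (a : pred T) n x y :
  has a (drop n [:: x; y]) = (n <= 0) && a x || (n <= 1) && a y.
Proof. by case: n => [|[|n]] //=; rewrite ?orbF. Qed.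

Lemma has_take2 (T : Type) (a : pred T) n x y :
  has a (take n [:: x; y]) = (0 < n) && a x || (1 < n) && a y.
Proof. by case: n => [|[|n]] //=; rewrite ?orbF. Qed.

Lemma set_nth_incr (c : seq nat) i : set_nth 0 c i (nth 0 c i).+1 = incr_nth c i.
Proof.
apply: (@eq_from_nth _ 0) => [|j _].
  by rewrite size_set_nth size_incr_nth; case: ltnP => h; lia.
by rewrite nth_set_nth nth_incr_nth /= eq_sym; case: eqP => [->|].
Qed.

Section RemovedBins.
Variable n : nat.

(* The bin [(q, b)] is the [b]-th bin of the [q]-th queue; it is removed in
   configuration [c] iff [b < c_q]. *)
Definition removed_bins (c : seq nat) (A : {set 'I_n * bool}) : {set 'I_n * bool} :=
  [set P in A | P.2 < nth 0 c P.1].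

Lemma removed_bins_sub c A : removed_bins c A \subset A.
Proof. by apply/subsetP => P; rewrite inE => /andP[]. Qed.

Lemma removed_bins_incr c (q : 'I_n) A :
  removed_bins c A \subset removed_bins (incr_nth c q) A.
Proof.
apply/subsetP => P; rewrite !inE nth_incr_nth => /andP[-> h].
by rewrite (leq_trans h) ?leq_addl.
Qed.

Lemma card_removed_bins_incr c (q : 'I_n) A :
  #|removed_bins (incr_nth c q) A| <= #|removed_bins c A|.+1.
Proof.
have sub : removed_bins (incr_nth c q) A \subset (q, nth 0 c q == 1) |: removed_bins c A.
  apply/subsetP => -[q' b]; rewrite !inE nth_incr_nth /= => /andP[-> hb].
  case: (eqVneq (q : nat) q') hb => [/val_inj <- | _] /=; last by rewrite add0n => ->; rewrite orbT.
  by rewrite add1n ltnS leq_eqVlt => /orP[/eqP <- | ->]; rewrite ?orbT //; case: b; rewrite eqxx.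
by apply: leq_trans (subset_leq_card sub) _; rewrite cardsU1; case: (_ \notin _).
Qed.
End RemovedBins.

Section QueueSystemOfDigraph.
Variables (V : finType) (E : rel V).
Local Notation l := (size (arcs E)).
Local Notation bin := ('I_l * bool)%type.

Definition arc (q : 'I_l) : V * V := tnth (in_tuple (arcs E)) q.
Definition bin_pallet (P : bin) : V := pltG (arc P.1, P.2).
Definition pallet_bins (t : V) : {set bin} := [set P | bin_pallet P == t].

Lemma size_QG : size (QG E) = l. Proof. exact: size_map. Qed.

Lemma nth_QG (q : 'I_l) : nth [::] (QG E) q = [:: (arc q, false); (arc q, true)].
Proof. by rewrite /QG (nth_map (arc q)) // -(tnth_nth (arc q) (in_tuple (arcs E))). Qed.

Lemma arcP u v : reflect (exists q, arc q = (u, v)) (E u v).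
Proof.
apply: (iffP idP) => [euv | [q e]].
  have : (u, v) \in in_tuple (arcs E) by rewrite mem_filter /= euv mem_enum.
  by case/tnthP => q e; exists q; rewrite /arc -e.
by have := mem_tnth q (in_tuple (arcs E)); rewrite -[tnth _ _]/(arc q) e mem_filter => /andP[].
Qed.

Lemma E_arc (q : 'I_l) : E (arc q).1 (arc q).2.
Proof. by apply/arcP; exists q; case: (arc q). Qed.

Lemma uniq_flatten_QG : uniq (flatten (QG E)).
Proof.
have -> : flatten (QG E) = [seq (e, b) | e <- arcs E, b <- [:: false; true]] by [].
apply: allpairs_uniq => //; first exact: filter_uniq (enum_uniq _).
by move=> [? ?] [? ?] _ _.
Qed.

Lemma open_palletQG c t :
  open_pallet (@pltG V) (QG E) c t <->
  (exists2 P, P \in pallet_bins t & P.2 < nth 0 c P.1) /\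
  (exists2 P, P \in pallet_bins t & nth 0 c P.1 <= P.2).
Proof.
rewrite /open_pallet /remaining /removed size_QG !has_iota_ord; split.
  case/andP => /existsP[q]; rewrite nth_QG has_drop2 => hr.
  case/existsP => [q']; rewrite nth_QG has_take2 => ht.
  split.
    by case/orP: ht => /andP[h e]; [exists (q', false) | exists (q', true)]; rewrite ?inE.
  by case/orP: hr => /andP[h e]; [exists (q, false) | exists (q, true)]; rewrite ?inE.
move=> [[[q b] Pt hb] [[q' b'] Pt' hb']].
apply/andP; split; apply/existsP; [exists q' | exists q].
  rewrite nth_QG has_drop2 -!/(bin_pallet (q', _)).
  by case: b' Pt' hb' => /=; rewrite inE => -> ->; rewrite ?orbT.
rewrite nth_QG has_take2 -!/(bin_pallet (q, _)).
by case: b Pt hb => /=; rewrite inE => -> ->; rewrite ?orbT.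
Qed.

Lemma open_palletQG_card c t :
  open_pallet (@pltG V) (QG E) c t =
  (0 < #|removed_bins c (pallet_bins t)| < #|pallet_bins t|).
Proof.
have sub := removed_bins_sub c (pallet_bins t).
apply/idP/andP => [/open_palletQG [[P Pt hP] [P' Pt' hP']] | [/card_gt0P [P] hP lt]].
  split; first by apply/card_gt0P; exists P; rewrite inE Pt.
  apply/proper_card/properP; split => //.
  by exists P' => //; rewrite inE Pt' /= -leqNgt.
have /properP [_ [P' Pt' hP']] : removed_bins c (pallet_bins t) \proper pallet_bins t.
  by rewrite properEcard sub.
apply/open_palletQG; split; first by move: hP; rewrite inE => /andP[]; exists P.
by exists P' => //; move: hP'; rewrite inE Pt' /= -leqNgt.
Qed.

Lemma trans_stepQGP c c' :
  trans_step (QG E) c c' <-> exists2 q : 'I_l, nth 0 c q < 2 & c' = incr_nth c q.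
Proof.
rewrite /trans_step size_QG has_iota_ord; split.
  by case/existsP => q; rewrite nth_QG set_nth_incr => /andP[h /eqP ->]; exists q.
by case=> q h ->; apply/existsP; exists q; rewrite nth_QG set_nth_incr h /=.
Qed.

Lemma pallet_bins_gt1 t : (exists u, E u t) -> (exists w, E t w) -> 1 < #|pallet_bins t|.
Proof.
move=> [u /arcP [q equ]] [w /arcP [q' eqw]]; apply/card_gt1P.
by exists (q, true), (q', false); rewrite !inE /bin_pallet /= equ eqw xpair_eqE andbF.
Qed.

Section ProcessingToDecomposition.
Variable cs : seq (seq nat).
Hypothesis proc : processing (QG E) cs.
Local Notation c0 := (nseq (size (QG E)) 0).
Local Notation m := (size cs).

(* The [k]-th configuration of the processing, frozen at the final one for [k >= m]. *)
Definition proc_cfg k := nth (last c0 cs) (c0 :: cs) k.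

Lemma proc_cfg_final k : m <= k -> proc_cfg k = map size (QG E).
Proof.
case/and4P: proc => _ _ _ /eqP <-; rewrite leq_eqVlt => /orP[/eqP <- | hk].
  by rewrite /proc_cfg -[m]/((size (c0 :: cs)).-1) nth_last.
by rewrite /proc_cfg nth_default.
Qed.

Lemma proc_cfg_step k :
  proc_cfg k.+1 = proc_cfg k \/ exists q : 'I_l, proc_cfg k.+1 = incr_nth (proc_cfg k) q.
Proof.
case: (ltnP k m) => hk; last by left; rewrite !proc_cfg_final // ltnW.
case/and4P: proc => _ /(pathP (last c0 cs)) /(_ k hk) /trans_stepQGP [q _ e] _ _.
by right; exists q.
Qed.

Definition removed_count (A : {set bin}) k := #|removed_bins (proc_cfg k) A|.

Lemma removed_count_step A k :
  removed_count A k <= removed_count A k.+1 <= (removed_count A k).+1.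
Proof.
rewrite /removed_count; case: (proc_cfg_step k) => [-> | [q ->]]; first by rewrite leqnn leqnSn.
by rewrite subset_leq_card ?removed_bins_incr ?card_removed_bins_incr.
Qed.

Lemma removed_count_mono A : {homo removed_count A : i j / i <= j}.
Proof.
by apply: homo_leq => [//|y x z|k]; [exact: leq_trans | case/andP: (removed_count_step A k)].
Qed.

Lemma removed_count_ivt A i j x :
  i <= j -> removed_count A i <= x <= removed_count A j ->
  exists2 k, i <= k <= j & removed_count A k = x.
Proof. by apply: nat_ivt => k; case/andP: (removed_count_step A k). Qed.

Lemma removed_count0 A : removed_count A 0 = 0.
Proof.
by apply: eq_card0 => P; rewrite !inE /proc_cfg /= nth_nseq; case: ifP; rewrite andbF.
Qed.

Lemma removed_count_final A : removed_count A m = #|A|.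
Proof.
apply: eq_card => P; rewrite inE proc_cfg_final // (nth_map [::]) ?size_QG //.
by rewrite nth_QG; case: P.2; rewrite andbT.
Qed.

Lemma queue_split_time (q : 'I_l) : exists2 k, k <= m & nth 0 (proc_cfg k) q = 1.
Proof.
have step k : nth 0 (proc_cfg k.+1) q <= (nth 0 (proc_cfg k) q).+1.
  by case: (proc_cfg_step k) => [-> | [q' ->]] //; rewrite nth_incr_nth; case: eqP.
have [|k /andP[_ km] fk] := @nat_ivt (fun k => nth 0 (proc_cfg k) q) 0 m 1 step (leq0n m).
  rewrite (proc_cfg_final (leqnn m)) (nth_map [::]) ?size_QG // nth_QG.
  by rewrite /proc_cfg /= nth_nseq; case: ifP.
by exists k.
Qed.

Definition open_sets : seq {set V} :=
  mkseq (fun k => [set t | open_pallet (@pltG V) (QG E) (proc_cfg k) t]) m.+1.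

Lemma mem_open_sets k t : k <= m ->
  (t \in nth set0 open_sets k) =
  (0 < removed_count (pallet_bins t) k < #|pallet_bins t|).
Proof. by move=> km; rewrite nth_mkseq // inE open_palletQG_card. Qed.

Lemma open_sets_width p :
  uses_at_most (@pltG V) (QG E) cs p -> \max_(A <- open_sets) #|A| <= p.
Proof.
move=> /allP use; apply/bigmax_leqP_seq => A /mapP [k]; rewrite mem_iota => /andP[_ km] -> _.
by apply: (use (proc_cfg k)); rewrite /proc_cfg mem_nth.
Qed.

Lemma size_open_sets : size open_sets = m.+1. Proof. exact: size_mkseq. Qed.

Lemma open_sets_convex t i j k : i <= k <= j -> j <= m ->
  t \in nth set0 open_sets i -> t \in nth set0 open_sets j -> t \in nth set0 open_sets k.
Proof.
move=> /andP[ik kj] jm; have km := leq_trans kj jm; have im := leq_trans ik km.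
rewrite !mem_open_sets // => /andP[ti _] /andP[_ tj].
have := removed_count_mono (pallet_bins t) ik; have := removed_count_mono (pallet_bins t) kj.
lia.
Qed.

Hypotheses (in_arc : forall v, exists u, E u v) (out_arc : forall v, exists w, E v w).

Lemma open_sets_cover v : exists2 k, k <= m & v \in nth set0 open_sets k.
Proof.
have gt1 := pallet_bins_gt1 (in_arc v) (out_arc v).
have [|k /andP[_ km] fk] := @removed_count_ivt (pallet_bins v) 0 m 1 (leq0n m).
  by rewrite removed_count0 removed_count_final; lia.
by exists k; rewrite // mem_open_sets // fk gt1.
Qed.

Lemma open_sets_arc u v : E u v -> exists i j, [/\ i <= j, j <= m,
  u \in nth set0 open_sets i & v \in nth set0 open_sets j].
Proof.
move=> /arcP [q equv]; have [k km fk] := queue_split_time q.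
have gt1u := pallet_bins_gt1 (in_arc u) (out_arc u).
have gt1v := pallet_bins_gt1 (in_arc v) (out_arc v).
have fu : 0 < removed_count (pallet_bins u) k.
  by apply/card_gt0P; exists (q, false); rewrite !inE /bin_pallet /= equv fk eqxx.
have fv : removed_count (pallet_bins v) k < #|pallet_bins v|.
  apply/proper_card/properP; split; first exact: removed_bins_sub.
  by exists (q, true); rewrite !inE /bin_pallet /= equv ?fk eqxx.
have [|i /andP[_ ik] fi] := @removed_count_ivt (pallet_bins u) 0 k 1 (leq0n k).
  by rewrite removed_count0 fu.
have [|j /andP[kj jm] fj] := @removed_count_ivt (pallet_bins v) k m #|pallet_bins v|.-1 km.
  by rewrite removed_count_final; lia.
exists i, j; rewrite !mem_open_sets ?fi ?fj ?gt1u ?(leq_trans ik) //.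
by split => //; lia.
Qed.

Lemma open_sets_decomp : dir_path_decomp E open_sets.
Proof.
split => [v | u v /open_sets_arc [i [j [ij jm ui vj]]] | t i j k ik kj].
- by have [k km vk] := open_sets_cover v; exists k; rewrite ?size_open_sets.
- by exists i, j; rewrite size_open_sets.
- by rewrite size_open_sets ltnS => jm; apply: open_sets_convex; rewrite ?ik.
Qed.

End ProcessingToDecomposition.

Section DecompositionToProcessing.
Variable X : seq {set V}.
Hypothesis hX : dir_path_decomp E X.
Local Notation n := (size X).

Definition first_occ v := find (fun A : {set V} => v \in A) X.
Definition last_occ v := n.-1 - find (fun A : {set V} => v \in A) (rev X).

Lemma has_occ v : has (fun A : {set V} => v \in A) X.
Proof.
case: hX => cover _ _; have [i ilt vi] := cover v.
by apply/hasP; exists (nth set0 X i); rewrite ?mem_nth.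
Qed.

Lemma first_occ_lt v : first_occ v < n. Proof. by rewrite -has_find has_occ. Qed.

Lemma mem_first_occ v : v \in nth set0 X (first_occ v).
Proof. exact: (nth_find set0 (has_occ v)). Qed.

Lemma first_occ_min v i : v \in nth set0 X i -> first_occ v <= i.
Proof. by move=> vi; rewrite leqNgt; apply/negP => /(before_find set0); rewrite vi. Qed.

Lemma last_occ_spec v : last_occ v = n - (find (fun A : {set V} => v \in A) (rev X)).+1.
Proof. by have := has_occ v; rewrite -has_rev has_find size_rev /last_occ; lia. Qed.

Lemma last_occ_lt v : last_occ v < n.
Proof. by rewrite last_occ_spec; have := first_occ_lt v; lia. Qed.

Lemma mem_last_occ v : v \in nth set0 X (last_occ v).
Proof.
have hr : has (fun A : {set V} => v \in A) (rev X) by rewrite has_rev has_occ.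
by rewrite last_occ_spec -nth_rev ?(nth_find set0 hr) // -size_rev -has_find.
Qed.

Lemma last_occ_max v i : i < n -> v \in nth set0 X i -> i <= last_occ v.
Proof.
move=> ilt vi; rewrite last_occ_spec.
suff : find (fun A : {set V} => v \in A) (rev X) <= n - i.+1 by lia.
rewrite leqNgt; apply/negP => /(before_find set0); rewrite nth_rev ?size_rev; last by lia.
have -> : n - (n - i.+1).+1 = i by lia.
by rewrite vi.
Qed.

Lemma mem_between_occ v s : first_occ v <= s <= last_occ v -> v \in nth set0 X s.
Proof.
case: hX => _ _ conv /andP[fs sl].
exact: conv _ _ _ _ fs sl (last_occ_lt v) (mem_first_occ v) (mem_last_occ v).
Qed.

Lemma first_occ_le_last_occ u v : E u v -> first_occ u <= last_occ v.
Proof.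
case: hX => _ arcs_ok _ /arcs_ok [i [j [ij jlt ui vj]]].
exact: leq_trans (first_occ_min ui) (leq_trans ij (last_occ_max jlt vj)).
Qed.

(* A first bin [(q, false)] is due when its pallet first appears in [X], a
   second bin [(q, true)] when its pallet last appears; bins are removed in
   order of due stage, first bins before second bins within a stage. *)
Definition stage (P : bin) : nat :=
  if P.2 then last_occ (bin_pallet P) else first_occ (bin_pallet P).
Definition bin_key (P : bin) : nat := P.2 + (stage P).*2.
Definition bin_order : seq bin := sort (relpre bin_key leq) (enum {: bin}).
Definition rank (P : bin) : nat := index P bin_order.

Lemma mem_bin_order P : P \in bin_order. Proof. by rewrite mem_sort mem_enum. Qed.

Lemma size_bin_order : size bin_order = 2 * l.
Proof. by rewrite size_sort -cardT card_prod card_ord card_bool mulnC. Qed.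

Lemma rank_lt P : rank P < 2 * l.
Proof. by rewrite -size_bin_order /rank index_mem mem_bin_order. Qed.

Lemma rank_inj : injective rank.
Proof. by move=> P P'; apply: (index_inj P); apply: mem_bin_order. Qed.

Lemma rank_onto k : k < 2 * l -> exists P, rank P = k.
Proof.
rewrite -size_bin_order; case def: bin_order => [//|P0 s] kl.
by exists (nth P0 bin_order k); rewrite /rank index_uniq ?def // -def sort_uniq enum_uniq.
Qed.

Lemma key_le_of_rank P P' : rank P <= rank P' -> bin_key P <= bin_key P'.
Proof.
have sorted_order : sorted (relpre bin_key leq) bin_order.
  by apply: sort_sorted => x y; exact: leq_total.
have key_trans : transitive (relpre bin_key leq) by move=> ? ? ?; exact: leq_trans.
have key_refl : reflexive (relpre bin_key leq) by move=> ?; exact: leqnn.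
exact: (sorted_leq_index key_trans key_refl sorted_order P P') (mem_bin_order P) (mem_bin_order P').
Qed.

Lemma stage_le_of_rank P P' : rank P <= rank P' -> stage P <= stage P'.
Proof.
move=> /key_le_of_rank; rewrite -(half_bit_double (stage P) P.2) -(half_bit_double (stage P') P'.2).
exact: half_leq.
Qed.

Lemma rank_first_second (q : 'I_l) : rank (q, false) < rank (q, true).
Proof.
rewrite ltnNge; apply/negP => /key_le_of_rank; rewrite /bin_key /stage /bin_pallet /pltG /=.
by have := first_occ_le_last_occ (E_arc q); lia.
Qed.

Definition sched_cfg k : seq nat :=
  [seq (rank (q, false) < k) + (rank (q, true) < k) | q <- enum 'I_l].

Lemma size_sched_cfg k : size (sched_cfg k) = l.
Proof. by rewrite size_map size_enum_ord. Qed.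

Lemma nth_sched_cfg (q : 'I_l) k :
  nth 0 (sched_cfg k) q = (rank (q, false) < k) + (rank (q, true) < k).
Proof. by rewrite (nth_map q) ?size_enum_ord // nth_ord_enum. Qed.

Lemma removed_sched_cfg (P : bin) k : (P.2 < nth 0 (sched_cfg k) P.1) = (rank P < k).
Proof.
case: P => q b; rewrite nth_sched_cfg /=; have := rank_first_second q.
by case: b; case: (ltnP (rank (q, false)) k); case: (ltnP (rank (q, true)) k) => //= *; lia.
Qed.

Lemma sched_cfg0 : sched_cfg 0 = nseq l 0.
Proof.
apply: (@eq_from_nth _ 0) => [|i]; rewrite size_sched_cfg ?size_nseq // => il.
by rewrite nth_nseq il -[i]/(val (Ordinal il)) nth_sched_cfg.
Qed.

Lemma sched_cfg_final : sched_cfg (2 * l) = map size (QG E).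
Proof.
apply: (@eq_from_nth _ 0) => [|i]; rewrite size_sched_cfg ?size_map ?size_QG // => il.
by rewrite -[i]/(val (Ordinal il)) nth_sched_cfg (nth_map [::]) ?size_QG // nth_QG !rank_lt.
Qed.

Lemma sched_cfg_step k : k < 2 * l -> trans_step (QG E) (sched_cfg k) (sched_cfg k.+1).
Proof.
move=> kl; have [[q b] rP] := rank_onto kl; apply/trans_stepQGP; exists q.
  have := removed_sched_cfg (q, b) k; rewrite rP ltnn /= => /negbT; rewrite -leqNgt.
  by move/leq_ltn_trans; apply; case: (b).
apply: (@eq_from_nth _ 0) => [|i]; first by rewrite size_incr_nth !size_sched_cfg ltn_ord.
rewrite size_sched_cfg => il; rewrite -[i]/(val (Ordinal il)) nth_incr_nth !nth_sched_cfg.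
move: (Ordinal il) => j.
have rk c : (rank (j, c) < k.+1) = ((j, c) == (q, b)) || (rank (j, c) < k).
  by rewrite ltnS leq_eqVlt -rP (inj_eq rank_inj).
have := rank_first_second j; rewrite !rk !xpair_eqE.
case: (eqVneq j q) => [ejq | njq]; last first.
  by rewrite (_ : (q == j :> nat) = false) //; apply/eqP => /val_inj ejq; rewrite ejq eqxx in njq.
by subst j; rewrite eqxx; clear rk; case: b rP => /= ->; rewrite ltnn => _; lia.
Qed.

Lemma sched_cfg_ok k : config_ok (QG E) (sched_cfg k).
Proof.
rewrite /config_ok size_sched_cfg size_QG eqxx /=.
apply/(all_nthP (0, [::])) => i; rewrite size_zip size_sched_cfg size_QG minnn => il.
rewrite nth_zip ?size_sched_cfg ?size_QG //= -[i]/(val (Ordinal il)) nth_sched_cfg nth_QG /=.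
by case: (_ < k); case: (_ < k).
Qed.

Lemma stage_between P : first_occ (bin_pallet P) <= stage P <= last_occ (bin_pallet P).
Proof.
have first_le_last v := first_occ_min (mem_last_occ v).
by case: P => q [] /=; rewrite /stage /= leqnn ?first_le_last.
Qed.

Lemma stage_lt P : stage P < n.
Proof. by case: P => q []; rewrite /stage /= ?last_occ_lt ?first_occ_lt. Qed.

Lemma open_sched_cfg_sub (P : bin) t :
  open_pallet (@pltG V) (QG E) (sched_cfg (rank P).+1) t -> t \in nth set0 X (stage P).
Proof.
case/open_palletQG => [[P1 P1t r1] [P2 P2t r2]].
rewrite removed_sched_cfg ltnS in r1; rewrite leqNgt removed_sched_cfg -leqNgt in r2.
rewrite !inE in P1t P2t; move/eqP: P1t => P1t; move/eqP: P2t => P2t.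
apply: mem_between_occ; apply/andP; split.
  rewrite -P1t; case/andP: (stage_between P1) => + _; move/leq_trans; apply.
  exact: stage_le_of_rank.
rewrite -P2t; case/andP: (stage_between P2) => _; apply: leq_trans.
by apply: stage_le_of_rank; exact: ltnW.
Qed.

Lemma nb_open_sched_cfg p k :
  \max_(A <- X) #|A| <= p -> k <= 2 * l -> nb_open (@pltG V) (QG E) (sched_cfg k) <= p.
Proof.
case: k => [hp _ | k hp kl].
  rewrite /nb_open (@eq_card0 _ [set t | _]) // => t; rewrite inE.
  by apply/negP => /open_palletQG [[P _]]; rewrite removed_sched_cfg.
have [P <-] := rank_onto kl; apply: leq_trans hp.
apply: leq_trans _ (leq_bigmax_seq (F := fun A : {set V} => #|A|) (P := xpredT) _
  (mem_nth set0 (stage_lt P)) isT).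
by apply: subset_leq_card; apply/subsetP => t; rewrite inE; exact: open_sched_cfg_sub.
Qed.

Definition schedule : seq (seq nat) := [seq sched_cfg k | k <- iota 1 (2 * l)].

Lemma schedule_processing : processing (QG E) schedule.
Proof.
rewrite /processing /schedule uniq_flatten_QG size_QG -sched_cfg0 /=; apply/and3P; split.
- by apply: path_map_iota => k /andP[_ kl]; apply: sched_cfg_step.
- by rewrite sched_cfg_ok; apply/allP => _ /mapP [k _ ->]; exact: sched_cfg_ok.
- by rewrite last_map last_iota add0n sched_cfg_final.
Qed.

Lemma schedule_uses p : \max_(A <- X) #|A| <= p -> uses_at_most (@pltG V) (QG E) schedule p.
Proof.
move=> hp; apply/allP => c; rewrite size_QG -sched_cfg0 inE => /orP[/eqP -> | /mapP [k]].
  exact: nb_open_sched_cfg.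
by rewrite mem_iota => kin ->; apply: nb_open_sched_cfg => //; lia.
Qed.

End DecompositionToProcessing.

End QueueSystemOfDigraph.

Theorem lemma4 (V : finType) (E : rel V) (p : nat) :
  (forall v, ~~ E v v) ->
  (forall v, exists u, E u v) ->
  (forall v, exists w, E v w) ->
  0 < p ->
  (exists X : seq {set V}, dir_path_decomp E X /\ dpd_width X <= p - 1)
  <-> has_processing (@pltG V) (QG E) p.
Proof.
(* Loops do no harm: a loop (v, v) merely gives v one more bin of each kind. *)
move=> _ in_arc out_arc p_gt0; split.
  move=> [X [hX width]]; exists (schedule E X); split; first exact: schedule_processing.
  by apply: (schedule_uses hX); move: width; rewrite /dpd_width; lia.
move=> [cs [proc use]]; exists (open_sets E cs); split.
  exact: open_sets_decomp.
by rewrite /dpd_width leq_sub2r // (open_sets_width use).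
Qed.
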